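(* Let $A_n$ be the nilCoxeter algebra, let $\psi_n$ be the algebra involution of $A_n$ with $\psi_n(Y_i)=Y_{n-i}$, and let $A_n^{\psi}$ be the $A_n$-bimodule which is $A_n$ with left action by left multiplication and right action twisted by $\psi_n$ (i.e. $a\cdot t\cdot b=at\psi_n(b)$). Let $A_n^{\ast}=\mathrm{Hom}_{\mathbb{Q}}(A_n,\mathbb{Q})$ with the $A_n$-bimodule structure $(a f b)(y)=f(bya)$. Then $A_n^{\ast}$ and $A_n^{\psi}$ are isomorphic as $A_n$-bimodules.
   Context: $A_n$ is the unital $\mathbb{Q}$-algebra generated by $Y_1,\dots,Y_{n-1}$ with relations $Y_i^2=0$, $Y_iY_j=Y_jY_i$ for $|i-j|>1$, $Y_iY_{i+1}Y_i=Y_{i+1}Y_iY_{i+1}$. *)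

From HB Require Import structures.
From mathcomp Require Import all_boot all_order all_algebra.
Set Implicit Arguments. Unset Strict Implicit. Unset Printing Implicit Defensive.
Import Order.TTheory GRing.Theory Num.Theory.
Local Open Scope ring_scope.

(* Generators Y_1, ..., Y_{n-1} are encoded as Y : nat -> B; only the values
   at indices 1 <= i <= n-1 matter. *)
Definition nilCoxeter_rels (B : algType rat) (n : nat) (Y : nat -> B) : Prop :=
  [/\ (forall i, (1 <= i < n)%N -> Y i * Y i = 0),
      (forall i j, (1 <= i < n)%N -> (1 <= j < n)%N ->
         ((i.+1 < j) || (j.+1 < i))%N -> Y i * Y j = Y j * Y i)
    & (forall i, (1 <= i)%N -> (i.+1 < n)%N ->
         Y i * Y i.+1 * Y i = Y i.+1 * Y i * Y i.+1)].

Definition is_alg_hom (A B : algType rat) (f : A -> B) : Prop :=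
  [/\ (forall (c : rat) (x y : A), f (c *: x + y) = c *: f x + f y),
      f 1 = 1
    & (forall x y : A, f (x * y) = f x * f y)].

(* (A, Y) is the unital Q-algebra presented by generators Y_1..Y_{n-1} and the
   nilCoxeter relations, i.e. it satisfies the universal property of the
   presentation. *)
Definition is_nilCoxeter (A : algType rat) (n : nat) (Y : nat -> A) : Prop :=
  nilCoxeter_rels n Y /\
  forall (B : algType rat) (Z : nat -> B), nilCoxeter_rels n Z ->
    exists f : A -> B,
      [/\ is_alg_hom f,
          (forall i, (1 <= i < n)%N -> f (Y i) = Z i)
        & (forall g : A -> B, is_alg_hom g ->
             (forall i, (1 <= i < n)%N -> g (Y i) = Z i) -> g =1 f)].

Definition is_Qlinear_functional (A : algType rat) (f : A -> rat) : Prop :=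
  forall (c : rat) (x y : A), f (c *: x + y) = c * f x + f y.

From HB Require Import structures.
From mathcomp Require Import all_boot all_order all_algebra all_fingroup.
From mathcomp Require Import zify.
From Stdlib Require Import ClassicalEpsilon.
Set Implicit Arguments. Unset Strict Implicit. Unset Printing Implicit Defensive.
Import GRing.Theory.
Local Open Scope ring_scope.

(* A_n is spanned by the n! products of the normal words, concatenations of
   descending runs Y_j Y_(j-1) ... Y_(j-d+1) with j increasing: their span is
   stable under right multiplication by Y_i, which commutes past the last run,
   extends it, kills it, or (braid relation) passes through it as Y_(i-1).
   On Q[S_n] the operators [Lop i], sending e_p to e_(s_i p) when this adds an
   inversion and to 0 otherwise, satisfy the nilCoxeter relations and commute
   with their right-handed analogues [Rop j]; let f be the induced
   representation.  Every e_w is reached from e_1 by a word in the [Lop i], so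
   the normal products are linearly independent, and e_w0 is reached from every
   e_w.  Hence, with frob x the coefficient of e_w0 in f(x) e_1, the pairing
   (y, t) |-> frob (y t) is nondegenerate.  Since s_i w0 = w0 s_(n-i) and left
   and right operators commute, frob (Y_i x) = frob (x Y_(n-i)), so
   frob (b x) = frob (x psi(b)) and t |-> frob (_ t) is a bimodule isomorphism
   from A_n^psi onto A_n^*. *)

Lemma nilCoxeter_endo_id n (A : algType rat) (Y : nat -> A) (g : A -> A) :
  is_nilCoxeter n Y -> is_alg_hom g -> (forall i, (1 <= i < n)%N -> g (Y i) = Y i) ->
  g =1 id.
Proof.
case=> rels univ gh gY x; have [f [_ _ f_uniq]] := univ A Y rels.
have id_hom : is_alg_hom (@id A) by [].
by rewrite (f_uniq g gh gY) -(f_uniq id id_hom).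
Qed.

Definition classic_pred (T : Type) (P : T -> Prop) : pred T :=
  fun x => if excluded_middle_informative (P x) then true else false.

Lemma classic_predP (T : Type) (P : T -> Prop) x : reflect (P x) (classic_pred P x).
Proof. by rewrite /classic_pred; case: excluded_middle_informative => h; constructor. Qed.

(* The elements satisfying [P] form a subalgebra containing the generators; by
   the universal property its inclusion is onto. *)
Section NilCoxeterInduction.
Variables (n : nat) (A : algType rat) (Y : nat -> A) (P : A -> Prop).
Hypothesis P1 : P 1.
Hypothesis P_lin : forall (c : rat) x y, P x -> P y -> P (c *: x + y).
Hypothesis P_mul : forall x y, P x -> P y -> P (x * y).
Hypothesis P_gen : forall i, (1 <= i < n)%N -> P (Y i).

Let S := classic_pred P.

Let S_subalg_closed : subalg_closed S.
Proof.
split; first exact/classic_predP.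
- by move=> c u v /classic_predP Pu /classic_predP Pv; apply/classic_predP/P_lin.
- by move=> u v /classic_predP Pu /classic_predP Pv; apply/classic_predP/P_mul.
Qed.

HB.instance Definition _ := GRing.isSubalgClosed.Build rat A S S_subalg_closed.
Local Notation subA := {x : A | S x}.
HB.instance Definition _ := [Choice of subA by <:].
HB.instance Definition _ := [SubChoice_isSubAlgebra of subA by <:].

Let Ysub i : subA :=
  if (1 <= i < n)%N =P true is ReflectT i_bd then
    Sub (Y i) (introT (classic_predP _ _) (P_gen i_bd))
  else 0.

Let YsubE i : (1 <= i < n)%N -> val (Ysub i) = Y i.
Proof. by rewrite /Ysub; case: eqP. Qed.

Lemma nilCoxeter_ind : is_nilCoxeter n Y -> forall a, P a.
Proof.
move=> HA; have [[Y2 Ycomm Ybraid] univ] := HA.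
have rels_sub : nilCoxeter_rels n Ysub.
  split.
  - by move=> i i_bd; apply: val_inj; rewrite rmorphM /= YsubE // Y2.
  - move=> i j i_bd j_bd far; apply: val_inj.
    by rewrite !rmorphM /= !YsubE //; exact: Ycomm.
  - move=> i i_ge1 i_lt; have i_bd : (1 <= i < n)%N by lia.
    have i1_bd : (1 <= i.+1 < n)%N by lia.
    by apply: val_inj; rewrite !rmorphM /= !YsubE // Ybraid.
have [f [[f_lin f1 fM] fY _]] := univ subA Ysub rels_sub.
have valf_hom : is_alg_hom (fun x => val (f x)).
  split=> [c x y|| x y]; last by rewrite fM rmorphM.
  - by rewrite f_lin raddfD; congr (_ + _); exact: (linearZ _ c (f x)).
  - by rewrite f1 rmorph1.
have valfY i : (1 <= i < n)%N -> val (f (Y i)) = Y i by move=> i_bd; rewrite fY // YsubE.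
move=> a; rewrite -[a](nilCoxeter_endo_id HA valf_hom valfY); exact/classic_predP/valP.
Qed.

End NilCoxeterInduction.

Lemma nilCoxeter_rels_le1 (A : algType rat) (Y : nat -> A) n :
  (n <= 1)%N -> nilCoxeter_rels n Y.
Proof. by move=> n_le; split=> *; lia. Qed.

Lemma is_nilCoxeter_0_1 (A : algType rat) (Y : nat -> A) :
  is_nilCoxeter 0 Y -> is_nilCoxeter 1 Y.
Proof.
case=> _ univ; split=> [|B Z _]; first exact: nilCoxeter_rels_le1.
have [f [fh _ f_uniq]] := univ B Z (nilCoxeter_rels_le1 Z (leq0n 1)).
by exists f; split=> // [i|g gh _]; [lia | apply: f_uniq => // i; lia].
Qed.

Section Span.
Variables (R : pzRingType) (V : lmodType R).

Definition inspan (s : seq V) (x : V) :=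
  exists c : nat -> R, x = \sum_(i < size s) c i *: s`_i.

Lemma inspan_ind (s : seq V) (Q : V -> Prop) :
  Q 0 -> (forall c x y, Q x -> Q y -> Q (c *: x + y)) -> {in s, forall x, Q x} ->
  forall x, inspan s x -> Q x.
Proof.
move=> Q0 QZD Qs x [c ->]; apply: big_ind => //.
- by move=> u v Qu Qv; rewrite -[u]scale1r; apply: QZD.
- by move=> i _; rewrite -[_ *: _]addr0; apply: QZD => //; apply/Qs/mem_nth.
Qed.

Lemma inspan0 s : inspan s 0.
Proof. by exists (fun _ => 0); rewrite big1 // => i _; rewrite scale0r. Qed.

Lemma inspanZD s (a : R) x y : inspan s x -> inspan s y -> inspan s (a *: x + y).
Proof.
move=> [c ->] [d ->]; exists (fun i => a * c i + d i).
rewrite scaler_sumr -big_split; apply: eq_bigr => i _.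
by rewrite scalerDl scalerA.
Qed.

Lemma inspan_mem s x : x \in s -> inspan s x.
Proof.
move=> xs; exists (fun i => (i == index x s)%:R).
have ix : (index x s < size s)%N by rewrite index_mem.
rewrite (bigD1 (Ordinal ix)) //= eqxx scale1r nth_index // big1 ?addr0 // => i.
by rewrite -val_eqE /= => /negbTE ->; rewrite scale0r.
Qed.

End Span.

Lemma inspan_linear (R : pzRingType) (V W : lmodType R) (s : seq V) (t : seq W) (f : V -> W) :
  linear f -> {in s, forall x, inspan t (f x)} -> forall x, inspan s x -> inspan t (f x).
Proof.
move=> f_lin fs; apply: inspan_ind => // [|c x y fx fy]; last by rewrite f_lin; apply: inspanZD.
by have := f_lin (-1) 0 0; rewrite scaler0 addr0 scaleN1r addNr => ->; apply: inspan0.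
Qed.

Definition desc_run (h d : nat) : seq nat := [seq (h - j)%N | j <- iota 0 d].

Lemma desc_runD h a b : desc_run h (a + b) = desc_run h a ++ desc_run (h - a) b.
Proof.
rewrite /desc_run iotaD map_cat add0n -[a]addn0 iotaDl -map_comp addn0.
by congr (_ ++ _); apply: eq_map => j /=; lia.
Qed.

Lemma desc_runS h d : desc_run h d.+1 = h :: desc_run h.-1 d.
Proof. by rewrite -add1n desc_runD subn1 /= subn0. Qed.

Lemma desc_runSr h d : desc_run h d.+1 = rcons (desc_run h d) (h - d)%N.
Proof. by rewrite -addn1 desc_runD cats1 /desc_run /= subn0. Qed.

Lemma mem_desc_run j h d : j \in desc_run h d -> exists2 x, (x < d)%N & j = (h - x)%N.
Proof. by case/mapP => x; rewrite mem_iota => x_lt ->; exists x. Qed.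

(* The products of these words form a basis of A_(k+1). *)
Fixpoint normal_words (k : nat) : seq (seq nat) :=
  if k is k'.+1 then [seq u ++ desc_run k d | u <- normal_words k', d <- iota 0 k.+1]
  else [:: [::]].

Lemma normal_wordsS k :
  normal_words k.+1 = [seq u ++ desc_run k.+1 d | u <- normal_words k, d <- iota 0 k.+2].
Proof. by []. Qed.

Lemma size_normal_words k : size (normal_words k) = k.+1`!.
Proof.
elim: k => [|k IHk] //.
by rewrite normal_wordsS size_allpairs IHk size_iota [in RHS]factS mulnC.
Qed.

Lemma nil_normal_words k : [::] \in normal_words k.
Proof.
elim: k => [|k IHk] //; rewrite normal_wordsS; apply/allpairsP; exists ([::], 0%N).
by rewrite mem_iota.
Qed.

Section Words.
Variables (n : nat) (A : algType rat) (Y : nat -> A).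

Definition Yword (w : seq nat) : A := foldr (fun i acc => Y i * acc) 1 w.

Lemma Yword_cat u v : Yword (u ++ v) = Yword u * Yword v.
Proof. by elim: u => [|a u IHu] /=; rewrite ?mul1r // IHu mulrA. Qed.

Lemma Yword_rcons u i : Yword (rcons u i) = Yword u * Y i.
Proof. by rewrite -cats1 Yword_cat /= mulr1. Qed.

Definition normal_forms k := map Yword (normal_words k).

Lemma normal_forms_mul_desc_run k x d : (d <= k.+1)%N ->
  inspan (normal_forms k) x -> inspan (normal_forms k.+1) (x * Yword (desc_run k.+1 d)).
Proof.
move=> d_le; apply: (inspan_linear (f := fun x => x * _)) => [c u v|_ /mapP [u u_in ->]].
  by rewrite mulrDl scalerAl.
apply/inspan_mem; rewrite -Yword_cat; apply: map_f.
by rewrite normal_wordsS; apply/allpairsP; exists (u, d); rewrite mem_iota.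
Qed.

Hypothesis rels : nilCoxeter_rels n Y.

Lemma Yword_comm w i : (1 <= i < n)%N ->
  {in w, forall j, (1 <= j < n) && ((i.+1 < j) || (j.+1 < i))}%N ->
  Y i * Yword w = Yword w * Y i.
Proof.
case: rels => _ Ycomm _ i_bd; elim: w => [|a w IHw] far_w /=; first by rewrite mulr1 mul1r.
have /andP [a_bd far_a] := far_w a (mem_head a w).
by rewrite mulrA Ycomm // -!mulrA IHw // => j jw; apply/far_w; rewrite inE jw orbT.
Qed.

Lemma Yword_desc_run_comm h d i : (1 <= i)%N -> (i.+1 < h.+1 - d)%N -> (h < n)%N ->
  Yword (desc_run h d) * Y i = Y i * Yword (desc_run h d).
Proof.
move=> i_ge1 i_lt h_lt; symmetry; apply: Yword_comm; first lia.
by move=> _ /mem_desc_run [x x_lt ->]; lia.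
Qed.

Lemma Yword_desc_run_mulY0 h d : (0 < d <= h)%N -> (h < n)%N ->
  Yword (desc_run h d) * Y (h.+1 - d) = 0.
Proof.
case: rels => Y2 _ _ d_bd h_lt; rewrite -(prednK (proj1 (andP d_bd))) desc_runSr.
by rewrite Yword_rcons -mulrA (_ : h - d.-1 = h.+1 - d.-1.+1)%N ?prednK ?Y2 ?mulr0 //; lia.
Qed.

Lemma Yword_desc_run_braid h d i : (d <= h)%N -> (h.+1 - d < i <= h)%N -> (h < n)%N ->
  Yword (desc_run h d) * Y i = Y i.-1 * Yword (desc_run h d).
Proof.
case: rels => _ _ Ybraid d_le i_bd h_lt.
have -> : d = ((h - i) + (d - (h - i) - 2).+2)%N by lia.
rewrite desc_runD !desc_runS !Yword_cat /= (_ : h - (h - i) = i)%N; last lia.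
set P := desc_run h (h - i); set Q := desc_run i.-1.-1 _.
have QYi : Yword Q * Y i = Y i * Yword Q.
  symmetry; apply: Yword_comm => [|_ /mem_desc_run [x x_lt ->]]; lia.
have PYi1 : Y i.-1 * Yword P = Yword P * Y i.-1.
  apply: Yword_comm => [|_ /mem_desc_run [x x_lt ->]]; lia.
have braid : Y i * (Y i.-1 * Y i) = Y i.-1 * (Y i * Y i.-1).
  by rewrite !mulrA -[in LHS](prednK (_ : 0 < i)%N) -?Ybraid ?prednK //; lia.
rewrite -!mulrA QYi !mulrA -[_ * Y i * Y i.-1 * Y i]mulrA -[_ * Y i * (Y i.-1 * Y i)]mulrA.
by rewrite braid !mulrA -PYi1.
Qed.

Lemma normal_forms_mulY k : (k < n)%N -> forall x, inspan (normal_forms k) x ->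
  forall i, (1 <= i <= k)%N -> inspan (normal_forms k) (x * Y i).
Proof.
elim: k => [|k IHk] k_lt x x_span i i_bd; first lia.
have IHw u j : u \in normal_words k -> (1 <= j <= k)%N ->
    inspan (normal_forms k) (Yword u * Y j).
  by move=> u_in j_bd; apply: IHk => //; [lia | apply/inspan_mem/map_f].
apply: (inspan_linear (f := fun x => x * Y i)) x_span.
  by move=> c u v; rewrite mulrDl scalerAl.
move=> _ /mapP [_ /allpairsP [[v d] [v_in d_in ->]] ->].
rewrite mem_iota in d_in; move: d_in => /= d_in.
rewrite Yword_cat -mulrA.
have [lt_i|] := ltnP i (k.+1 - d).
  rewrite Yword_desc_run_comm 1?mulrA; try lia.
  by apply: normal_forms_mul_desc_run; [lia | apply: IHw v_in _; lia].
rewrite leq_eqVlt => /orP [/eqP eq_i|].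
  rewrite -eq_i -Yword_rcons -desc_runSr -Yword_cat; apply/inspan_mem/map_f.
  rewrite normal_wordsS; apply/allpairsP; exists (v, d.+1).
  by rewrite mem_iota /=; split=> //; lia.
rewrite leq_eqVlt => /orP [/eqP eq_i|gt_i].
  rewrite -eq_i -subSn ?Yword_desc_run_mulY0 ?mulr0; try lia.
  exact: inspan0.
rewrite Yword_desc_run_braid 1?mulrA; try lia.
by apply: normal_forms_mul_desc_run; [lia | apply: IHw v_in _; lia].
Qed.

End Words.

Section PermMatrices.
Variable T : finType.
Local Notation P := {perm T}.

Definition nperm := #|P|.-1.

Lemma nperm_card : nperm.+1 = #|P|.
Proof. by rewrite /nperm prednK // (cardD1 1%g). Qed.

Definition perm_at (k : 'I_nperm.+1) : P := enum_val (cast_ord nperm_card k).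
Definition perm_idx (p : P) : 'I_nperm.+1 := cast_ord (esym nperm_card) (enum_rank p).

Lemma perm_atK : cancel perm_at perm_idx.
Proof. by move=> k; rewrite /perm_at /perm_idx enum_valK cast_ordK. Qed.

Lemma perm_idxK : cancel perm_idx perm_at.
Proof. by move=> p; rewrite /perm_at /perm_idx cast_ordKV enum_rankK. Qed.

Lemma perm_at_eq k p : (perm_at k == p) = (k == perm_idx p).
Proof. exact: (can2_eq perm_atK perm_idxK). Qed.

Local Notation M := 'M[rat]_nperm.+1.

(* Matrices act on columns; [op_mx cond g] maps [e_p] (the column [perm_idx p])
   to [e_(g p)] if [cond p], and to [0] otherwise. *)
Definition op_mx (cond : pred P) (g : P -> P) : M :=
  \matrix_(r, c) (cond (perm_at c) && (perm_at r == g (perm_at c)))%:R.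

Lemma mulmx_op_mxE (X : M) cond g r c :
  (X *m op_mx cond g) r c = if cond (perm_at c) then X r (perm_idx (g (perm_at c))) else 0.
Proof.
rewrite mxE; case: ifP => cond_c; last by rewrite big1 // => k _; rewrite mxE cond_c mulr0.
rewrite (bigD1 (perm_idx (g (perm_at c)))) //= mxE cond_c perm_idxK eqxx mulr1.
rewrite big1 ?addr0 // => k.
by rewrite mxE perm_at_eq => /negbTE ->; rewrite andbF mulr0.
Qed.

Lemma op_mx_mulmxE (X : M) cond g r c : involutive g ->
  (op_mx cond g *m X) r c =
    if cond (g (perm_at r)) then X (perm_idx (g (perm_at r))) c else 0.
Proof.
move=> gK; rewrite mxE; case: ifP => cond_r.
  rewrite (bigD1 (perm_idx (g (perm_at r)))) //= mxE perm_idxK cond_r gK eqxx mul1r.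
  rewrite big1 ?addr0 // => k.
  by move=> /negbTE k_neq; rewrite mxE eq_sym (canF_eq gK) perm_at_eq k_neq andbF mul0r.
rewrite big1 // => k _; rewrite mxE eq_sym (canF_eq gK).
by case: eqP => [->|]; rewrite ?cond_r ?andbF mul0r.
Qed.

Lemma op_mx_mul c1 g1 c2 g2 :
  op_mx c1 g1 *m op_mx c2 g2 = op_mx (fun p => c2 p && c1 (g2 p)) (g1 \o g2).
Proof.
apply/matrixP => r c; rewrite mulmx_op_mxE [RHS]mxE mxE perm_idxK /=.
by case: (c2 (perm_at c)).
Qed.

Lemma eq_op_mx c1 g1 c2 g2 : c1 =1 c2 -> {in c1, g1 =1 g2} -> op_mx c1 g1 = op_mx c2 g2.
Proof.
move=> eq_c eq_g; apply/matrixP => r c; rewrite !mxE -eq_c.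
by case c1c: (c1 _) => //; rewrite (eq_g _ c1c).
Qed.

Lemma op_mx_eq0 cond g : cond =1 pred0 -> op_mx cond g = 0.
Proof. by move=> cond0; apply/matrixP => r c; rewrite !mxE cond0. Qed.

End PermMatrices.

Arguments perm_at {T} k.
Arguments perm_atK {T}.

Lemma val_tperm k (x y z : 'I_k) : (tperm x y z : nat) =
  if z == x :> nat then y : nat else if z == y :> nat then x : nat else z : nat.
Proof.
case: tpermP => [->|->|zx zy]; first by rewrite eqxx.
  by case: eqP => [->|]; rewrite ?eqxx.
by rewrite !val_eqE; do 2 case: eqP => // _.
Qed.

Ltac case_nat_eqs :=
  repeat match goal with |- context [(?a == ?b)%N] =>
    lazymatch a with context [if _ then _ else _] => fail | _ =>
    lazymatch b with context [if _ then _ else _] => fail | _ =>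
    case: (a =P b) => ? /= end end end.

Lemma tperm_braid k (x y z : 'I_k) : x <> y :> nat -> y <> z :> nat -> x <> z :> nat ->
  (tperm x y * tperm y z * tperm x y = tperm y z * tperm x y * tperm y z)%g.
Proof.
move=> xy yz xz; apply/permP => v; apply/val_inj => /=.
rewrite !permM !val_tperm; case_nat_eqs; lia.
Qed.

Lemma tperm_braid_lt k (x y z : 'I_k) (p : {perm 'I_k}) : x != y -> y != z -> x != z ->
  [&& (p x < p y)%N, ((tperm x y * p)%g y < (tperm x y * p)%g z)%N &
      ((tperm y z * (tperm x y * p))%g x < (tperm y z * (tperm x y * p))%g y)%N] =
  ((p x < p y) && (p y < p z))%N.
Proof.
move=> xy yz xz; have tz : tperm x y z = z by apply: tpermD.
have tx : tperm y z x = x by apply: tpermD; rewrite eq_sym.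
rewrite !permM ?(tpermL, tpermR, tz, tx).
case: (ltnP (p x) (p y)) => //= lt_xy.
by apply/idP/idP => [/andP [] //|lt_yz]; rewrite lt_yz (ltn_trans lt_xy lt_yz).
Qed.

Lemma tperm_braid_lt' k (x y z : 'I_k) (p : {perm 'I_k}) : x != y -> y != z -> x != z ->
  [&& (p y < p z)%N, ((tperm y z * p)%g x < (tperm y z * p)%g y)%N &
      ((tperm x y * (tperm y z * p))%g y < (tperm x y * (tperm y z * p))%g z)%N] =
  ((p x < p y) && (p y < p z))%N.
Proof.
move=> xy yz xz; have tz : tperm x y z = z by apply: tpermD.
have tx : tperm y z x = x by apply: tpermD; rewrite eq_sym.
rewrite !permM ?(tpermL, tpermR, tz, tx).
case: (ltnP (p y) (p z)) => lt_yz; rewrite ?andbF ?andbT //=.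
by apply/idP/idP => [/andP [] //|lt_xy]; rewrite lt_xy (ltn_trans lt_xy lt_yz).
Qed.

Lemma increasing_ord_id m (f : 'I_m.+1 -> nat) : (forall v, f v <= m)%N ->
  (forall j, (j < m)%N -> (f (inord j) < f (inord j.+1))%N) -> forall v, f v = v.
Proof.
move=> f_le f_incr.
have ge j : (j <= m)%N -> (j <= f (inord j))%N.
  by elim: j => [|j IHj] j_le //; have := f_incr j j_le; have := IHj (ltnW j_le); lia.
have le d : (d <= m)%N -> (f (inord (m - d)) <= m - d)%N.
  elim: d => [|d IHd] d_le; first by rewrite subn0.
  have := f_incr (m - d.+1)%N; rewrite (_ : (m - d.+1).+1 = m - d)%N; last lia.
  by have := IHd (ltnW d_le); lia.
move=> v; have v_le : (v <= m)%N by rewrite -ltnS.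
have := ge v v_le; have := le (m - v)%N; rewrite (_ : m - (m - v) = v)%N ?inord_val; lia.
Qed.

Section NilCoxeterModel.
Variable m : nat.
Local Notation T := 'I_m.+1.
Local Notation P := {perm T}.
Local Notation M := 'M[rat]_((nperm T).+1).

Definition lo i : T := inord i.-1.
Definition hi i : T := inord i.

Lemma loE i : (i <= m)%N -> lo i = i.-1 :> nat.
Proof. by move=> i_le; rewrite /lo inordK //; lia. Qed.

Lemma hiE i : (i <= m)%N -> hi i = i :> nat.
Proof. by move=> i_le; rewrite /hi inordK //; lia. Qed.

Lemma lt_lo_hi i : (1 <= i <= m)%N -> (lo i < hi i)%N.
Proof. by move=> i_bd; rewrite loE ?hiE //; lia. Qed.

Lemma lo_neq_hi i : (1 <= i <= m)%N -> lo i != hi i.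
Proof. by move=> i_bd; rewrite -val_eqE /= ltn_eqF ?lt_lo_hi. Qed.

Lemma perm_lo_neq_hi (w : P) i : (1 <= i <= m)%N -> w (lo i) != w (hi i) :> nat.
Proof. by move=> i_bd; rewrite val_eqE (inj_eq perm_inj) (lo_neq_hi i_bd). Qed.

Definition tau i : P := tperm (lo i) (hi i).

Lemma tauK i : involutive (fun p : P => tau i * p)%g.
Proof. by move=> p; rewrite mulgA tperm2 mul1g. Qed.

Lemma tauKr i : involutive (fun p : P => p * tau i)%g.
Proof. by move=> p; rewrite /= -mulgA tperm2 mulg1. Qed.

Lemma tau_comm i j : (1 <= i <= m)%N -> (1 <= j <= m)%N -> ((i.+1 < j) || (j.+1 < i))%N ->
  (tau i * tau j = tau j * tau i)%g.
Proof.
move=> i_bd j_bd far; apply/permP => v; apply/val_inj => /=.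
rewrite !permM /tau !val_tperm !loE ?hiE //; try lia; case_nat_eqs; lia.
Qed.

Definition asc i (p : P) : bool := (p (lo i) < p (hi i))%N.

Lemma asc_tau i p : (1 <= i <= m)%N -> asc i (tau i * p) = ~~ asc i p.
Proof.
move=> i_bd; rewrite /asc !permM /tau tpermL tpermR ltnNge leq_eqVlt.
by rewrite (negbTE (perm_lo_neq_hi p i_bd)).
Qed.

Lemma asc_tau_far i j p : (1 <= i <= m)%N -> (1 <= j <= m)%N ->
  ((i.+1 < j) || (j.+1 < i))%N -> asc i (tau j * p) = asc i p.
Proof.
move=> i_bd j_bd far; rewrite /asc !permM; congr (p _ < p _)%N; apply: val_inj => /=;
  rewrite /tau val_tperm !loE ?hiE //; try lia; case_nat_eqs; lia.
Qed.

Definition Lop i : M := op_mx (asc i) (fun p => tau i * p)%g.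
Definition Rop i : M := op_mx (fun p => asc i p^-1) (fun p => p * tau i)%g.

Lemma Lop_nilCoxeter : nilCoxeter_rels m.+1 Lop.
Proof.
split=> [i i_bd|i j i_bd j_bd far|i i_ge1 i_lt]; rewrite -?mulmxE !op_mx_mul.
- by apply: op_mx_eq0 => p /=; rewrite asc_tau ?andbN //; lia.
- apply: eq_op_mx => [p|p _] /=; last by rewrite !mulgA tau_comm //; lia.
  by rewrite !asc_tau_far 1?andbC //; try lia; rewrite orbC.
- have lo1 : lo i.+1 = hi i by [].
  have d1 : lo i != hi i by apply: lo_neq_hi; lia.
  have d2 : hi i != hi i.+1 by rewrite -lo1 lo_neq_hi //; lia.
  have d3 : lo i != hi i.+1 by rewrite -val_eqE /= loE ?hiE //; lia.
  apply: eq_op_mx => [p|p _] /=; rewrite /asc /tau lo1 ?tperm_braid_lt ?tperm_braid_lt' //.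
  by rewrite !mulgA tperm_braid //; apply/eqP; rewrite val_eqE.
Qed.

Lemma lt_tau i (x y : T) : (1 <= i <= m)%N ->
  ~~ ((x == lo i) && (y == hi i)) -> ~~ ((x == hi i) && (y == lo i)) ->
  (tau i x < tau i y)%N = (x < y)%N.
Proof.
move=> i_bd; rewrite -!val_eqE /= /tau !val_tperm !loE ?hiE //; try lia.
by move=> h1 h2; apply/idP/idP; case_nat_eqs; rewrite ?eqxx //= in h1 h2 *; lia.
Qed.

Lemma asc_Lop_Rop i j (p : P) : (1 <= i <= m)%N -> (1 <= j <= m)%N ->
  asc j p^-1 && asc i (p * tau j) = asc i p && asc j (tau i * p)^-1.
Proof.
move=> i_bd j_bd; rewrite /asc invMg !permM /tau tpermV.
have ltF k : (1 <= k <= m)%N -> (hi k < lo k)%N = false.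
  by move=> k_bd; apply/negbTE; rewrite -leqNgt ltnW ?lt_lo_hi.
case: (boolP ((p (lo i) == lo j) && (p (hi i) == hi j))) => [/andP [/eqP e1 /eqP e2]|n1].
  have [f1 f2] : p^-1%g (lo j) = lo i /\ p^-1%g (hi j) = hi i.
    by rewrite -e1 -e2 !permK.
  by rewrite e1 e2 f1 f2 ?(tpermL, tpermR) !ltF // !andbF.
case: (boolP ((p (lo i) == hi j) && (p (hi i) == lo j))) => [/andP [/eqP e1 /eqP e2]|n2].
  have [f1 f2] : p^-1%g (hi j) = lo i /\ p^-1%g (lo j) = hi i.
    by rewrite -e1 -e2 !permK.
  by rewrite e1 e2 f1 f2 ?(tpermL, tpermR) !ltF // !andbF.
rewrite -/(tau i) -/(tau j) (lt_tau j_bd n1 n2) (lt_tau i_bd) 1?andbC //.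
  by apply: contra n1 => /andP [/eqP <- /eqP <-]; rewrite !permKV !eqxx.
by apply: contra n2 => /andP [/eqP <- /eqP <-]; rewrite !permKV !eqxx.
Qed.

Lemma Lop_Rop_comm i j : (1 <= i <= m)%N -> (1 <= j <= m)%N ->
  Lop i *m Rop j = Rop j *m Lop i.
Proof.
move=> i_bd j_bd; rewrite !op_mx_mul; apply: eq_op_mx => [p|p _] /=; last by rewrite mulgA.
exact: asc_Lop_Rop.
Qed.

Definition w0 : P := perm (@rev_ord_inj m.+1).

Lemma w0E v : w0 v = (m - v)%N :> nat.
Proof. by rewrite permE /=; lia. Qed.

Lemma w0V : (w0^-1 = w0)%g.
Proof.
apply/eqP; rewrite eq_invg_mul; apply/eqP/permP => v; apply/val_inj.
by rewrite permM perm1 /= !w0E; have := ltn_ord v; lia.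
Qed.

Lemma all_asc_perm1 (w : P) : (forall i, (1 <= i <= m)%N -> asc i w) -> w = 1%g.
Proof.
move=> w_asc; apply/permP => v; apply/val_inj; rewrite perm1 /=.
apply: (increasing_ord_id (f := fun v => (w v : nat))) => [u|j j_lt]; first by rewrite -ltnS.
by apply: (w_asc j.+1); lia.
Qed.

Lemma exists_descent (w : P) : w != 1%g ->
  exists2 i, (1 <= i <= m)%N & (w (hi i) < w (lo i))%N.
Proof.
move=> w_neq1; suff /hasP [i] : has (fun i => w (hi i) < w (lo i))%N (iota 1 m).
  by rewrite mem_iota => i_bd; exists i => //; lia.
apply: contraNT w_neq1 => /hasPn no_desc; apply/eqP/all_asc_perm1 => i i_bd.
rewrite /asc ltn_neqAle perm_lo_neq_hi // leqNgt no_desc // mem_iota; lia.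
Qed.

Lemma exists_ascent (w : P) : w != w0 -> exists2 i, (1 <= i <= m)%N & asc i w.
Proof.
move=> w_neqw0; suff /hasP [i] : has (fun i => asc i w) (iota 1 m).
  by rewrite mem_iota => i_bd; exists i => //; lia.
apply: contraNT w_neqw0 => /hasPn no_asc; apply/eqP.
rewrite -[w]mulg1 -[1%g](mulgV w0) w0V mulgA (all_asc_perm1 (w := w * w0)%g) ?mul1g //.
move=> i i_bd; rewrite /asc !permM !w0E.
have : (w (hi i) < w (lo i))%N.
  rewrite ltn_neqAle eq_sym perm_lo_neq_hi //= leqNgt.
  by apply: no_asc; rewrite mem_iota; lia.
by have := ltn_ord (w (lo i)); lia.
Qed.

(* By the rearrangement inequality [mu] is maximal at [1]; it increases when a
   descent is removed. *)
Definition mu (p : P) : nat := (\sum_(v : T) v * p v)%N.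

Lemma mu_le (p : P) : (mu p <= m.+1 * (m * m))%N.
Proof.
have -> : (m.+1 * (m * m) = \sum_(v : T) m * m)%N by rewrite sum_nat_const card_ord.
rewrite /mu; apply: leq_sum => v _.
by have := ltn_ord v; have := ltn_ord (p v); nia.
Qed.

Lemma mu_tau (w : P) i : (1 <= i <= m)%N -> (w (hi i) < w (lo i))%N ->
  (mu w < mu (tau i * w)%g)%N.
Proof.
move=> i_bd desc_i.
have -> : mu (tau i * w)%g = (\sum_(v : T) tau i v * w v)%N.
  rewrite /mu (reindex_inj (h := tau i) perm_inj); apply: eq_bigr => v _.
  by rewrite permM tpermK.
have hl : hi i != lo i by rewrite eq_sym lo_neq_hi.
rewrite /mu (bigD1 (lo i)) //= (bigD1 (lo i) (P := xpredT)) //=.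
rewrite (bigD1 (hi i)) //= (bigD1 (hi i) (P := fun v => v != lo i)) //=.
rewrite [in X in (_ < X)%N](eq_bigr (fun v : T => v * w v)%N); last first.
  by move=> v /andP [v_lo v_hi]; rewrite /tau tpermD // eq_sym.
rewrite /tau tpermL tpermR !addnA ltn_add2r; move: desc_i; rewrite loE ?hiE //; try lia.
by case: (i) i_bd => // k _ /=; rewrite !mulSn; lia.
Qed.

Definition Lword (y : seq nat) : M := foldr (fun i X => Lop i *m X) 1%:M y.

Lemma Lword_rcons y i : Lword (rcons y i) = Lword y *m Lop i.
Proof. by elim: y => [|a y IHy] /=; rewrite ?mul1mx ?mulmx1 // IHy mulmxA. Qed.

Definition valid_word (y : seq nat) := all (fun i => 1 <= i <= m)%N y.

Lemma Lword_col1_reach (w : P) :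
  exists2 y, valid_word y & forall k, Lword y k (perm_idx 1%g) = (perm_at k == w)%:R.
Proof.
have [b] := ubnP (m.+1 * (m * m) - mu w); elim: b w => // b IHb w lt_b.
have [->|w_neq1] := eqVneq w 1%g; first by exists [::] => // k; rewrite mxE perm_at_eq.
have [i i_bd desc_i] := exists_descent w_neq1.
have [|y y_valid y_reach] := IHb (tau i * w)%g.
  by have := mu_tau i_bd desc_i; have := mu_le (tau i * w)%g; lia.
exists (i :: y) => [|k]; first by rewrite /valid_word /= i_bd.
rewrite (_ : Lword (i :: y) = Lop i *m Lword y) // (op_mx_mulmxE _ _ _ _ (@tauK i)).
rewrite y_reach perm_idxK (inj_eq (mulgI _)).
have [-> /=|] := eqVneq (perm_at k) w; last by case: ifP.
by rewrite asc_tau // /asc -leqNgt ltnW.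
Qed.

Lemma Lword_roww0_reach (w : P) :
  exists2 y, valid_word y & forall k, Lword y (perm_idx w0) k = (perm_at k == w)%:R.
Proof.
have [b] := ubnP (mu w); elim: b w => // b IHb w lt_b.
have [->|w_neqw0] := eqVneq w w0; first by exists [::] => // k; rewrite mxE eq_sym perm_at_eq.
have [i i_bd asc_i] := exists_ascent w_neqw0.
have desc_i : ((tau i * w)%g (hi i) < (tau i * w)%g (lo i))%N.
  by rewrite !permM /tau tpermL tpermR.
have [|y y_valid y_reach] := IHb (tau i * w)%g.
  by have := mu_tau i_bd desc_i; rewrite mulgA tperm2 mul1g; lia.
exists (rcons y i) => [|k]; first by rewrite /valid_word all_rcons i_bd.
rewrite Lword_rcons mulmx_op_mxE y_reach perm_idxK (inj_eq (mulgI _)).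
by have [->|] := eqVneq (perm_at k) w; [rewrite asc_i | case: ifP].
Qed.

Lemma mulmx_Rop_col1 (X : M) j r : (1 <= j <= m)%N ->
  (X *m Rop j) r (perm_idx 1%g) = (X *m Lop j) r (perm_idx 1%g).
Proof. by move=> j_bd; rewrite !mulmx_op_mxE perm_idxK invg1 mulg1 mul1g. Qed.

Lemma tau_w0 i : (1 <= i <= m)%N -> (tau i * w0 = w0 * tau (m.+1 - i))%g.
Proof.
move=> i_bd; apply/permP => v; apply/val_inj => /=.
rewrite !permM /tau !val_tperm !w0E !val_tperm !loE ?hiE; try lia.
by have := ltn_ord v; case_nat_eqs; lia.
Qed.

Lemma asc_w0 i : (1 <= i <= m)%N -> asc i w0 = false.
Proof. by move=> i_bd; rewrite /asc !w0E loE ?hiE //; lia. Qed.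

Lemma Lop_Rop_roww0 i c : (1 <= i <= m)%N ->
  Lop i (perm_idx w0) c = Rop (m.+1 - i) (perm_idx w0) c.
Proof.
move=> i_bd; have j_bd : (1 <= m.+1 - i <= m)%N by lia.
rewrite !mxE perm_idxK [w0 == _]eq_sym [w0 == _]eq_sym.
rewrite (canF_eq (@tauK i)) (canF_eq (@tauKr _)).
rewrite -tau_w0 //; have [-> /=|] := eqVneq (perm_at c) (tau i * w0)%g; last by rewrite !andbF.
by rewrite asc_tau ?asc_w0 // tau_w0 // invMg w0V tpermV asc_tau ?asc_w0.
Qed.

End NilCoxeterModel.

Lemma unitmx_delta_rows (F : fieldType) n (G : 'M[F]_n) :
  (forall k, exists c : 'rV_n, c *m G = delta_mx 0 k) -> G \in unitmx.
Proof.
move=> reach; rewrite -row_full_unit -sub1mx; apply/row_subP => k; rewrite row1.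
by have [c <-] := reach k; apply: submxMl.
Qed.

Lemma unitmx_trivial_ker (F : fieldType) n (H : 'M[F]_n) :
  (forall c : 'rV_n, c *m H = 0 -> c = 0) -> H \in unitmx.
Proof.
move=> ker0; rewrite -row_free_unit -kermx_eq0; apply/eqP/row_matrixP => i.
by rewrite row0; apply: ker0; rewrite -row_mul mulmx_ker row0.
Qed.

Section FrobeniusForm.
Variables (m : nat) (A : algType rat) (Y : nat -> A).
Hypothesis HA : is_nilCoxeter m.+1 Y.
Local Notation N := (nperm 'I_m.+1).+1.
Local Notation E := (normal_forms Y m).

Lemma size_normal_forms : size E = N.
Proof. by rewrite size_map size_normal_words nperm_card card_Sn. Qed.

Lemma normal_forms_span a : inspan E a.
Proof.
suff span_mul : forall x, inspan E x -> inspan E (x * a).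
  by rewrite -[a]mul1r; apply/span_mul/inspan_mem/(map_f (Yword Y) (nil_normal_words m)).
move: a; apply: (nilCoxeter_ind (P := fun a => forall x, inspan E x -> inspan E (x * a))) HA.
- by move=> x; rewrite mulr1.
- move=> c a b Pa Pb x x_span; rewrite mulrDr -scalerAr.
  exact: inspanZD (Pa _ x_span) (Pb _ x_span).
- by move=> a b Pa Pb x x_span; rewrite mulrA; apply/Pb/Pa.
- by move=> i i_bd x x_span; apply: (normal_forms_mulY (HA.1)).
Qed.

Definition nf_comb (c : 'rV[rat]_N) : A := \sum_i c 0 i *: E`_i.

Lemma nf_comb_surj a : exists c, a = nf_comb c.
Proof.
have [c ->] := normal_forms_span a; exists (\row_(i < N) c i).
by rewrite /nf_comb size_normal_forms; apply: eq_bigr => i _; rewrite mxE.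
Qed.

Variable f : A -> 'M[rat]_N.
Hypothesis fh : is_alg_hom f.
Hypothesis fY : forall i, (1 <= i < m.+1)%N -> f (Y i) = Lop m i.

Let f_lin : linear f. Proof. by case: fh. Qed.
HB.instance Definition _ := GRing.isLinear.Build rat A 'M[rat]_N *:%R f f_lin.

Lemma fM x y : f (x * y) = f x *m f y.
Proof. by case: fh => _ _ ->; rewrite mulmxE. Qed.

Lemma f_Yword y : valid_word m y -> f (Yword Y y) = Lword m y.
Proof.
elim: y => [|i y IHy] /=; first by case: fh.
by case/andP => i_bd y_valid; rewrite fM fY ?IHy.
Qed.

Lemma f_Rop_comm x j : (1 <= j <= m)%N -> f x *m Rop m j = Rop m j *m f x.
Proof.
move=> j_bd; move: x.
apply: (nilCoxeter_ind (P := fun x => f x *m Rop m j = Rop m j *m f x)) HA.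
- by case: fh => _ -> _; rewrite mul1mx mulmx1.
- by move=> c x y fx fy; rewrite linearP mulmxDl mulmxDr -scalemxAl -scalemxAr fx fy.
- by move=> x y fx fy; rewrite fM -mulmxA fy !mulmxA fx.
- by move=> i i_bd; rewrite fY // Lop_Rop_comm //; lia.
Qed.

Definition col1_mx : 'M[rat]_N := \matrix_(i, k) f E`_i k (perm_idx 1%g).

Lemma mulmx_col1_mx c k : (c *m col1_mx) 0 k = f (nf_comb c) k (perm_idx 1%g).
Proof.
rewrite linear_sum summxE mxE; apply: eq_bigr => i _.
by rewrite linearZ !mxE.
Qed.

Lemma col1_mx_unit : col1_mx \in unitmx.
Proof.
apply: unitmx_delta_rows => k.
have [y y_valid y_reach] := Lword_col1_reach (perm_at k).
have [c c_y] := nf_comb_surj (Yword Y y); exists c; apply/rowP => k'.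
by rewrite mulmx_col1_mx -c_y f_Yword // y_reach !mxE eqxx /= perm_at_eq perm_atK.
Qed.

Lemma col1_mx_ker0 (c : 'rV[rat]_N) : c *m col1_mx = 0 -> c = 0.
Proof. by move=> cG0; rewrite -[c]mulmx1 -(mulmxV col1_mx_unit) mulmxA cG0 !mul0mx. Qed.

Lemma nf_comb_inj c : nf_comb c = 0 -> c = 0.
Proof.
by move=> c0; apply: col1_mx_ker0; apply/rowP => k; rewrite mulmx_col1_mx c0 linear0 !mxE.
Qed.

Lemma f_col1_inj t : (forall k, f t k (perm_idx 1%g) = 0) -> t = 0.
Proof.
have [c ->] := nf_comb_surj t => ft0.
suff -> : c = 0 by rewrite /nf_comb big1 // => i _; rewrite mxE scale0r.
by apply: col1_mx_ker0; apply/rowP => k; rewrite mulmx_col1_mx ft0 mxE.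
Qed.

Lemma scalar_eq_on_normal_forms (h1 h2 : A -> rat) : scalar h1 -> scalar h2 ->
  (forall a : 'I_N, h1 E`_a = h2 E`_a) -> h1 =1 h2.
Proof.
move=> h1_lin h2_lin h12 y.
apply: (inspan_ind (Q := fun y => h1 y = h2 y)) (normal_forms_span y) => [||x x_in].
- by rewrite -(subrr 0) !(zmod_morphism_linear h1_lin, zmod_morphism_linear h2_lin) !subrr.
- by move=> c u v h12u h12v; rewrite h1_lin h2_lin h12u h12v.
have x_lt : (index x E < N)%N by rewrite -size_normal_forms index_mem.
by have := h12 (Ordinal x_lt); rewrite /= nth_index.
Qed.

Definition frob x : rat := f x (perm_idx (w0 m)) (perm_idx 1%g).

Lemma frob_is_scalar : scalar frob.
Proof. by move=> c x y; rewrite /frob linearP !mxE. Qed.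
HB.instance Definition _ := GRing.isLinear.Build rat A rat *%R frob frob_is_scalar.

Lemma frob_mul_scalar t : scalar (fun y => frob (y * t)).
Proof. by move=> c x y; rewrite mulrDl -scalerAl frob_is_scalar. Qed.

Lemma frob_Yl i x : (1 <= i <= m)%N -> frob (Y i * x) = frob (x * Y (m.+1 - i)).
Proof.
move=> i_bd; have j_bd : (1 <= m.+1 - i <= m)%N by lia.
rewrite /frob !fM !fY; try lia.
rewrite -mulmx_Rop_col1 // f_Rop_comm // !mxE; apply: eq_bigr => k _.
by rewrite Lop_Rop_roww0.
Qed.

Lemma frob_reach k t : exists y, frob (Yword Y y * t) = f t k (perm_idx 1%g).
Proof.
have [y y_valid y_reach] := Lword_roww0_reach (perm_at k); exists y.
rewrite /frob fM f_Yword // mxE (bigD1 k) //= y_reach eqxx mul1r big1 ?addr0 // => k'.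
move=> k'_neq.
by rewrite y_reach (can_eq perm_atK) (negbTE k'_neq) mul0r.
Qed.

Lemma frob_mul_inj t s : (forall y, frob (y * t) = frob (y * s)) -> t = s.
Proof.
move=> ts; apply/eqP; rewrite -subr_eq0; apply/eqP/f_col1_inj => k.
by have [y <-] := frob_reach k (t - s); rewrite mulrBr linearB /= ts subrr.
Qed.

Definition frob_mx : 'M[rat]_N := \matrix_(b, a) frob (E`_a * E`_b).

Lemma mulmx_frob_mx c a : (c *m frob_mx) 0 a = frob (E`_a * nf_comb c).
Proof.
rewrite /nf_comb mulr_sumr linear_sum mxE; apply: eq_bigr => b _.
by rewrite -scalerAr linearZ !mxE.
Qed.

Lemma frob_mx_unit : frob_mx \in unitmx.
Proof.
apply: unitmx_trivial_ker => c cH0; apply: nf_comb_inj; apply: frob_mul_inj => y.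
rewrite mulr0 linear0; move: y.
apply: (scalar_eq_on_normal_forms (h2 := fun=> 0)) => [|c' x z|a].
- exact: frob_mul_scalar.
- by rewrite mulr0 addr0.
- by rewrite -mulmx_frob_mx cH0 mxE.
Qed.

Lemma frob_mul_surj g : scalar g -> exists t, forall y, frob (y * t) = g y.
Proof.
move=> g_lin; exists (nf_comb ((\row_a g E`_a) *m invmx frob_mx)).
apply: (scalar_eq_on_normal_forms (h2 := g)) => // [|a]; first exact: frob_mul_scalar.
by rewrite -mulmx_frob_mx mulmxKV ?frob_mx_unit // mxE.
Qed.

Section Twist.
Variable psi : A -> A.
Hypothesis Hpsi : is_alg_hom psi.
Hypothesis HpsiY : forall i, (1 <= i < m.+1)%N -> psi (Y i) = Y (m.+1 - i)%N.

Let psi_lin : linear psi. Proof. by case: Hpsi. Qed.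
HB.instance Definition _ := GRing.isLinear.Build rat A A *:%R psi psi_lin.

Lemma frob_psi b x : frob (b * x) = frob (x * psi b).
Proof.
move: b x.
apply: (nilCoxeter_ind (P := fun b => forall x, frob (b * x) = frob (x * psi b))) HA.
- by case: Hpsi => _ -> _ x; rewrite mul1r mulr1.
- move=> c a b Pa Pb x.
  by rewrite linearP mulrDl mulrDr -scalerAl -scalerAr !frob_is_scalar Pa Pb.
- by case: Hpsi => _ _ psiM a b Pa Pb x; rewrite psiM -mulrA Pa -mulrA Pb !mulrA.
- by move=> i i_bd x; rewrite frob_Yl ?HpsiY //; lia.
Qed.

End Twist.
End FrobeniusForm.

Theorem mainTheorem3 (n : nat) (A : algType rat) (Y : nat -> A)
  (HA : is_nilCoxeter n Y)
  (psi : A -> A) (Hpsi : is_alg_hom psi)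
  (HpsiY : forall i, (1 <= i < n)%N -> psi (Y i) = Y (n - i)%N) :
  exists Phi : A -> A -> rat,
    [/\ (* Phi t is an element of A^* = Hom_Q(A, Q) *)
        (forall t, is_Qlinear_functional (Phi t)),
        (* Phi is Q-linear *)
        (forall (c : rat) (t s y : A), Phi (c *: t + s) y = c * Phi t y + Phi s y),
        (* Phi is injective *)
        (forall t s, Phi t =1 Phi s -> t = s),
        (* Phi is surjective onto A^* *)
        (forall f : A -> rat, is_Qlinear_functional f -> exists t, Phi t =1 f)
      & (* bimodule map A^psi -> A^*: Phi (a . t . b) = a . Phi t . b, where
           a . t . b = a t psi(b) in A^psi and (a f b)(y) = f (b y a) in A^* *)
        (forall a t b y : A, Phi (a * t * psi b) y = Phi t (b * y * a))].
Proof.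
wlog [m n_eq] : n HA HpsiY / exists m, n = m.+1.
  case: n HA HpsiY => [|m] HA HpsiY main; first last.
    by apply: (main m.+1) => //; exists m.
  by apply: (main 1%N); [exact: is_nilCoxeter_0_1 | case | exists 0%N].
subst n; have [f [fh fY _]] := HA.2 _ (Lop m) (Lop_nilCoxeter m).
exists (fun t y => frob f (y * t)); split.
- exact: frob_mul_scalar.
- by move=> c t s y; rewrite mulrDr -scalerAr frob_is_scalar.
- by move=> t s ts; apply: (frob_mul_inj HA fh fY).
- by move=> g g_lin; apply: (frob_mul_surj HA fh fY).
- move=> a t b y; have := frob_psi HA fh fY Hpsi HpsiY b (y * a * t).
  by rewrite !mulrA => <-.
Qed.
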